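(* Let $R=\mathbb{Z}$ or $R=\mathbb{Z}[i]$, let $\lambda$ be a positive integer, and let $A\in R^{n\times n}$ satisfy $A^*A=\lambda I$. Let $\mathrm{SNF}(A)=\mathrm{diag}(\alpha_1,\dots,\alpha_n)$ be its Smith normal form. Then $\overline{\alpha_j}\,\alpha_{n+1-j}=\lambda$ for all $1\leq j\leq n$.
   Context: The Smith normal form of $A\in R^{n\times n}$ is $\mathrm{diag}(\alpha_1,\dots,\alpha_n)$ where $A\in\mathrm{GL}_n(R)\,\mathrm{diag}(\alpha_1,\dots,\alpha_n)\,\mathrm{GL}_n(R)$, $\alpha_1\mid\alpha_2\mid\dots\mid\alpha_n$, and the $\alpha_j$ are normalized: for $R=\mathbb{Z}$, $\alpha_j>0$; for $R=\mathbb{Z}[i]$, $\mathrm{Re}\,\alpha_j>0$ and $\mathrm{Im}\,\alpha_j\geq 0$. $A^*$ is the conjugate transpose. *)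

(* Both rings Z and Z[i] are modelled as subrings of algC. *)
From HB Require Import structures.
From mathcomp Require Import all_boot all_order all_algebra all_field.
Set Implicit Arguments. Unset Strict Implicit. Unset Printing Implicit Defensive.
Import Order.TTheory GRing.Theory Num.Theory.
Local Open Scope ring_scope.

Inductive Rkind := RZ | RZi.

Definition inR (r : Rkind) (x : algC) : bool :=
  match r with
  | RZ => x \is a Num.int
  | RZi => ('Re x \is a Num.int) && ('Im x \is a Num.int)
  end.

Definition dvdR (r : Rkind) (a b : algC) : Prop :=
  exists c, inR r c /\ b = a * c.

Definition mxadj (n : nat) (A : 'M[algC]_n) : 'M[algC]_n :=
  \matrix_(i, j) (A j i)^*.

Definition isGL (r : Rkind) (n : nat) (P : 'M[algC]_n) : Prop :=
  (forall i j, inR r (P i j)) /\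
  exists P' : 'M[algC]_n, (forall i j, inR r (P' i j)) /\
    P *m P' = 1%:M /\ P' *m P = 1%:M.

Definition normalized (r : Rkind) (a : algC) : Prop :=
  match r with
  | RZ => 0 < a
  | RZi => 0 < 'Re a /\ 0 <= 'Im a
  end.

Definition isSNF (r : Rkind) (n : nat) (A : 'M[algC]_n) (alpha : 'I_n -> algC) : Prop :=
  (forall j, inR r (alpha j)) /\
  (exists P Q : 'M[algC]_n, isGL r P /\ isGL r Q /\
      A = P *m diag_mx (\row_j alpha j) *m Q) /\
  (forall i j : 'I_n, (j : nat) = i.+1 -> dvdR r (alpha i) (alpha j)) /\
  (forall j, normalized r (alpha j)).

(* Write A = P D Q with D = diag(alpha) and P, Q invertible over R.  From
   A^* A = lambda I we get D^* = X (lambda D^-1) Y and lambda D^-1 = X' D^* Y'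
   with X, Y, X', Y' over R; reversing the order of rows and columns turns
   lambda D^-1 into diag(lambda / alpha_{n+1-j}), again a divisibility chain.
   Two diagonal divisibility chains which divide each other have associate
   entries, because the product of the first k entries divides exactly the same
   elements as all the k x k minors.  So conj(alpha_j) and lambda / alpha_{n+1-j}
   differ by a unit w = lambda / (conj(alpha_j) alpha_{n+1-j}); the normalization
   forces Re w > 0, and the only unit of Z or Z[i] with positive real part is 1. *)

From HB Require Import structures.
From mathcomp Require Import all_boot all_order all_algebra all_field.
From mathcomp Require Import perm zify.
Import Order.TTheory GRing.Theory Num.Theory.
Set Implicit Arguments. Unset Strict Implicit. Unset Printing Implicit Defensive.
Local Open Scope ring_scope.

Lemma inR_ReIm r x : inR r x -> ('Re x \is a Num.int) && ('Im x \is a Num.int).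
Proof.
case: r => //= xZ; have xR : x \is Num.real by apply: Rreal_int.
by rewrite (Creal_ReP _ xR) (Creal_ImP _ xR) xZ rpred0.
Qed.

Lemma inR_int r x : x \is a Num.int -> inR r x.
Proof. by case: r => //; apply: inR_ReIm RZ x. Qed.

Fact inR_subring_closed r : subring_closed (inR r).
Proof.
split; first exact: inR_int.
- case: r => x y; first exact: rpredB.
  move=> /andP[? ?] /andP[? ?]; apply/andP; rewrite !raddfB.
  by split; apply: rpredB.
- case: r => x y; first exact: rpredM.
  move=> /andP[? ?] /andP[? ?]; apply/andP; rewrite ReM ImM.
  by split; rewrite ?rpredB ?rpredD ?rpredM.
Qed.

HB.instance Definition _ r :=
  GRing.isSubringClosed.Build algC (inR r) (inR_subring_closed r).

Lemma inR_conj r x : x \in inR r -> x^* \in inR r.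
Proof.
case: r => [xZ|/andP[? ?]]; first by rewrite conj_Creal ?Rreal_int.
by apply/andP; rewrite Re_conj Im_conj rpredN.
Qed.

Lemma sum_sqr_mul_eq1 (a b c d : int) :
  (a * a + b * b) * (c * c + d * d) = 1 -> 0 < a -> a = 1 /\ b = 0.
Proof.
move=> e a_gt0; have ab_ge1 : 1 <= a * a + b * b by nia.
have cd_ge1 : 1 <= c * c + d * d by nia.
have ab_eq1 : a * a + b * b = 1 by nia.
by split; nia.
Qed.

(* The units of Z and Z[i] are the roots of unity 1, -1, i, -i. *)
Lemma inR_unit_Re_gt0 r w w' :
  w \in inR r -> w' \in inR r -> w * w' = 1 -> 0 < 'Re w -> w = 1.
Proof.
move=> /inR_ReIm/andP[/intrP[a ha] /intrP[b hb]].
move=> /inR_ReIm/andP[/intrP[c hc] /intrP[d hd]] ww' Rew_gt0.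
have : `|w| ^+ 2 * `|w'| ^+ 2 = 1 by rewrite -exprMn -normrM ww' normr1 expr1n.
rewrite !normC2_Re_Im ha hb hc hd !expr2 -!intrM -!intrD -intrM -[1 : algC]/(1%:~R).
move=> /intr_inj/sum_sqr_mul_eq1[|a1 b0]; first by rewrite -(ltr0z algC) -ha.
by rewrite [w]Crect ha hb a1 b0 mulr0 addr0.
Qed.

Section Divisibility.
Variable r : Rkind.

Lemma dvdR_refl a : dvdR r a a.
Proof. by exists 1; split; [apply: rpred1 | rewrite mulr1]. Qed.

Lemma dvdR0 a : dvdR r a 0.
Proof. by exists 0; split; [apply: rpred0 | rewrite mulr0]. Qed.

Lemma dvdR_trans a b c : dvdR r a b -> dvdR r b c -> dvdR r a c.
Proof.
by move=> [x [xR ->]] [y [yR ->]]; exists (x * y); split; [apply: rpredM | rewrite mulrA].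
Qed.

Lemma dvdRD a b c : dvdR r a b -> dvdR r a c -> dvdR r a (b + c).
Proof.
by move=> [x [xR ->]] [y [yR ->]]; exists (x + y); split; [apply: rpredD | rewrite mulrDr].
Qed.

Lemma dvdR_mull z a b : z \in inR r -> dvdR r a b -> dvdR r a (z * b).
Proof.
by move=> zR [x [xR ->]]; exists (z * x); split; [apply: rpredM | rewrite mulrCA].
Qed.

Lemma dvdR_mul a b c d : dvdR r a b -> dvdR r c d -> dvdR r (a * c) (b * d).
Proof.
by move=> [x [xR ->]] [y [yR ->]]; exists (x * y); split; [apply: rpredM | rewrite mulrACA].
Qed.

Lemma dvdR_sum (I : finType) (P : pred I) a (F : I -> algC) :
  (forall i, P i -> dvdR r a (F i)) -> dvdR r a (\sum_(i | P i) F i).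
Proof. by move=> dvdF; elim/big_ind: _ => //; [apply: dvdR0 | apply: dvdRD]. Qed.

Definition assocR (x y : algC) :=
  exists w w', [/\ w \in inR r, w' \in inR r, w * w' = 1 & y = x * w].

Lemma dvdR_assocR x y : dvdR r x y -> dvdR r y x -> x != 0 -> assocR x y.
Proof.
move=> [w [wR ey]] [w' [w'R ex]] x_neq0; exists w, w'; split => //.
by apply: (mulfI x_neq0); rewrite mulr1 mulrA -ey.
Qed.

Lemma assocR_mulKl p q x y :
  p != 0 -> assocR p q -> assocR (p * x) (q * y) -> assocR x y.
Proof.
move=> p_neq0 [u [u' [uR u'R uu' def_q]]] [v [v' [vR v'R vv' def_qy]]].
exists (v * u'), (v' * u); split; try exact: rpredM.
  by rewrite mulrACA vv' mul1r mulrC.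
have uy : u * y = x * v by apply: (mulfI p_neq0); rewrite mulrA -def_q def_qy mulrA.
by rewrite mulrA -uy mulrAC uu' mul1r.
Qed.

End Divisibility.

Section Chains.
Variables (r : Rkind) (D : nat -> algC).
Hypothesis chainD : forall j, dvdR r (D j) (D j.+1).

Lemma chain_dvdR i j : (i <= j)%N -> dvdR r (D i) (D j).
Proof.
elim: j => [|j IHj]; first by rewrite leqn0 => /eqP->; apply: dvdR_refl.
rewrite leq_eqVlt => /predU1P[->|]; first exact: dvdR_refl.
by rewrite ltnS => /IHj/dvdR_trans; apply.
Qed.

(* The k-th smallest index of a set of k distinct indices is at least k. *)
Lemma chain_prod_dvdR (S : seq nat) :
  uniq S -> dvdR r (\prod_(i < size S) D i) (\prod_(j <- S) D j).
Proof.
have bound_S : all (gtn (\max_(j <- S) j).+1) S.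
  by apply/allP => j jS; rewrite /= ltnS; apply: leq_bigmax_seq.
move: (\max_(j <- S) j).+1 bound_S => n; elim: n S => [|n IHn] S.
  by case: S => //= _ _; rewrite big_ord0 big_nil; apply: dvdR_refl.
move=> boundS uS; have [nS|nNS] := boolP (n \in S); last first.
  apply: IHn uS; apply/allP => j jS; have /= := allP boundS j jS.
  by rewrite ltnS leq_eqVlt => /predU1P[eq_jn|]; first by rewrite -eq_jn jS in nNS.
have permS := perm_to_rem nS; have uS' := rem_uniq n uS.
have boundS' : all (gtn n) (rem n S).
  apply/allP => j jS'; have /= := allP boundS j (mem_rem jS').
  rewrite ltnS leq_eqVlt => /predU1P[eq_jn|//].
  by move: jS'; rewrite eq_jn mem_rem_uniqF.
have size_rem : (size (rem n S) <= n)%N.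
  rewrite -{2}(size_iota 0 n); apply: uniq_leq_size => // j /(allP boundS').
  by rewrite mem_iota.
have size_S : size S = (size (rem n S)).+1 by rewrite (perm_size permS).
rewrite (perm_big _ permS) size_S big_ord_recr big_cons /= mulrC.
by apply: dvdR_mul; [apply: chain_dvdR size_rem | apply: IHn].
Qed.

End Chains.

Definition dvdR_chain r n (d : 'I_n -> algC) :=
  forall i j : 'I_n, j = i.+1 :> nat -> dvdR r (d i) (d j).

(* Padding by zeros keeps the divisibility chain going past the last index. *)
Definition ext0 n (d : 'I_n -> algC) (j : nat) : algC :=
  if insub j is Some i then d i else 0.

Lemma ext0E n (d : 'I_n -> algC) (i : 'I_n) : ext0 d i = d i.
Proof. by rewrite /ext0 valK. Qed.

Lemma dvdR_chain_ext0 r n (d : 'I_n -> algC) :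
  dvdR_chain r d -> forall j, dvdR r (ext0 d j) (ext0 d j.+1).
Proof.
move=> chain_d j; have [lt_j1n|] := ltnP j.+1 n; last first.
  move=> le_n_j1; rewrite [ext0 d j.+1]/ext0 insubF ?ltnNge ?le_n_j1 //.
  exact: dvdR0.
have lt_jn := ltnW lt_j1n.
rewrite -[j]/(val (Ordinal lt_jn)) -[j.+1]/(val (Ordinal lt_j1n)) !ext0E.
exact: chain_d.
Qed.

Lemma prod_ext0_neq0 n (d : 'I_n -> algC) k :
  (k <= n)%N -> (forall i, d i != 0) -> \prod_(i < k) ext0 d i != 0.
Proof.
move=> le_kn d_neq0; rewrite prodf_seq_neq0; apply/allP => i _ /=.
by rewrite -[val i]/(val (widen_ord le_kn i)) ext0E.
Qed.

Definition minors_dvdR r k m n c (M : 'M[algC]_(m, n)) :=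
  forall (f : 'I_k -> 'I_m) (g : 'I_k -> 'I_n), dvdR r c (\det (mxsub f g M)).

Definition mxdvdR r m n (N M : 'M[algC]_(m, n)) :=
  exists X Y, [/\ X \is a mxOver (inR r), Y \is a mxOver (inR r) & M = X *m N *m Y].

(* Cauchy-Binet, before grouping the maps f by their image. *)
Lemma det_mulmx_ffun (R : comNzRingType) k p (X : 'M[R]_(k, p)) (Y : 'M[R]_(p, k)) :
  \det (X *m Y) =
    \sum_(f : {ffun 'I_k -> 'I_p}) (\prod_i X i (f i)) * \det (rowsub f Y).
Proof.
rewrite /determinant.
under eq_bigr => s _.
  under eq_bigr => i _ do rewrite mxE.
  rewrite bigA_distr_bigA big_distrr /=.
  over.
rewrite exchange_big /=; apply: eq_bigr => f _.
rewrite big_distrr /=; apply: eq_bigr => s _.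
rewrite big_split /= mulrCA; congr (_ * (_ * _)).
by apply: eq_bigr => i _; rewrite mxE.
Qed.

Lemma trmx_mxOver (T : Type) (S : {pred T}) m n (M : 'M[T]_(m, n)) :
  M \is a mxOver S -> M^T \is a mxOver S.
Proof. by move=> /mxOverP MS; apply/mxOverP => i j; rewrite mxE. Qed.

Section Minors.
Variables (r : Rkind) (k : nat) (c : algC).

Lemma minors_dvdR_mull p m n (X : 'M[algC]_(p, m)) (M : 'M[algC]_(m, n)) :
  X \is a mxOver (inR r) -> minors_dvdR r k c M -> minors_dvdR r k c (X *m M).
Proof.
move=> /mxOverP XR dvdM f g; rewrite mxsub_mul det_mulmx_ffun.
apply: dvdR_sum => h _; rewrite -mxsubrc; apply: dvdR_mull (dvdM _ _).
by apply: rpred_prod => i _; rewrite mxE.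
Qed.

Lemma minors_dvdR_trmx m n (M : 'M[algC]_(m, n)) :
  minors_dvdR r k c M -> minors_dvdR r k c M^T.
Proof. by move=> dvdM f g; rewrite -trmx_mxsub det_tr. Qed.

Lemma minors_dvdR_mxdvdR m n (N M : 'M[algC]_(m, n)) :
  mxdvdR r N M -> minors_dvdR r k c N -> minors_dvdR r k c M.
Proof.
move=> [X [Y [XR YR ->]]] dvdN; rewrite -[X *m N *m Y]trmxK trmx_mul.
apply/minors_dvdR_trmx/minors_dvdR_mull; first exact: trmx_mxOver.
exact/minors_dvdR_trmx/minors_dvdR_mull.
Qed.

End Minors.

Section DiagonalMinors.
Variables (r : Rkind) (n : nat) (d : 'I_n -> algC).

Lemma det_diag_mxsub_widen k (le_kn : (k <= n)%N) :
  \det (mxsub (widen_ord le_kn) (widen_ord le_kn) (diag_mx (\row_j d j))) =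
    \prod_(i < k) ext0 d i.
Proof.
have -> : mxsub (widen_ord le_kn) (widen_ord le_kn) (diag_mx (\row_j d j)) =
    diag_mx (\row_i d (widen_ord le_kn i)).
  by apply/matrixP => i j; rewrite !mxE -val_eqE.
rewrite det_diag; apply: eq_bigr => i _.
by rewrite mxE -[val i]/(val (widen_ord le_kn i)) ext0E.
Qed.

(* The only nonzero terms of a minor of a diagonal matrix are products of
   k distinct diagonal entries. *)
Lemma diag_minors_dvdR k :
  dvdR_chain r d -> minors_dvdR r k (\prod_(i < k) ext0 d i) (diag_mx (\row_j d j)).
Proof.
move=> chain_d f g.
have [/injectiveP inj_f|/injectivePn[i1 [i2 neq_i12 eq_f]]] := boolP (injectiveb f);
  last by rewrite (determinant_alternate neq_i12) => [|j]; [apply: dvdR0 | rewrite !mxE eq_f].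
rewrite /determinant; apply: dvdR_sum => s _.
apply: dvdR_mull; first by rewrite rpredX ?rpredN ?rpred1.
have [/forallP fgs|/forallPn[i0 /negbTE fgs_i0]] := boolP [forall i, f i == g (s i)];
  last by rewrite [X in dvdR _ _ X](bigD1 i0) //= !mxE fgs_i0 mulr0n mul0r; apply: dvdR0.
under eq_bigr => i _ do rewrite !mxE fgs mulr1n.
set S := [seq val (f i) | i <- enum 'I_k].
have -> : \prod_i d (f i) = \prod_(j <- S) ext0 d j.
  by rewrite big_map big_enum; apply: eq_bigr => i _; rewrite ext0E.
have uniq_S : uniq S by rewrite map_inj_uniq ?enum_uniq // => i j /val_inj/inj_f.
have := chain_prod_dvdR (dvdR_chain_ext0 chain_d) uniq_S.
by rewrite size_map size_enum_ord.
Qed.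

Lemma minors_dvdR_diag_prefix k c : (k <= n)%N ->
  minors_dvdR r k c (diag_mx (\row_j d j)) -> dvdR r c (\prod_(i < k) ext0 d i).
Proof.
by move=> le_kn /(_ (widen_ord le_kn) (widen_ord le_kn)); rewrite det_diag_mxsub_widen.
Qed.

End DiagonalMinors.

(* The k-th prefix products of a and b both divide every k-minor of either
   matrix, hence are associate; cancelling consecutive prefixes leaves the
   entries. *)
Lemma diag_mxdvdR_assocR r n (a b : 'I_n -> algC) :
  dvdR_chain r a -> dvdR_chain r b -> (forall j, a j != 0) ->
  mxdvdR r (diag_mx (\row_j a j)) (diag_mx (\row_j b j)) ->
  mxdvdR r (diag_mx (\row_j b j)) (diag_mx (\row_j a j)) ->
  forall j, assocR r (a j) (b j).
Proof.
move=> chain_a chain_b a_neq0 ab ba.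
have prefix_assocR k : (k <= n)%N ->
    assocR r (\prod_(i < k) ext0 a i) (\prod_(i < k) ext0 b i).
  move=> le_kn; apply: dvdR_assocR (prod_ext0_neq0 le_kn a_neq0).
    apply: minors_dvdR_diag_prefix le_kn _.
    exact: minors_dvdR_mxdvdR ab (diag_minors_dvdR chain_a).
  apply: minors_dvdR_diag_prefix le_kn _.
  exact: minors_dvdR_mxdvdR ba (diag_minors_dvdR chain_b).
move=> j; have := prefix_assocR _ (ltn_ord j); rewrite !big_ord_recr /= !ext0E.
have le_jn := ltnW (ltn_ord j).
exact: assocR_mulKl (prod_ext0_neq0 le_jn a_neq0) (prefix_assocR _ le_jn).
Qed.

Lemma mxadjE n (M : 'M[algC]_n) : mxadj M = (map_mx (@Num.conj algC) M)^T.
Proof. by apply/matrixP => i j; rewrite !mxE. Qed.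

Lemma mxadjM n (M N : 'M[algC]_n) : mxadj (M *m N) = mxadj N *m mxadj M.
Proof. by rewrite !mxadjE map_mxM trmx_mul. Qed.

Lemma mxadj1 n : mxadj (1%:M : 'M[algC]_n) = 1%:M.
Proof. by apply/matrixP => i j; rewrite !mxE rmorphMn rmorph1 eq_sym. Qed.

Lemma mxadj_diag n (d : 'I_n -> algC) :
  mxadj (diag_mx (\row_j d j)) = diag_mx (\row_j (d j)^*).
Proof.
apply/matrixP => i j; rewrite !mxE rmorphMn eq_sym.
by have [->|] := eqVneq i j; rewrite ?mulr0n.
Qed.

Lemma mxadj_mxOver r n (M : 'M[algC]_n) :
  M \is a mxOver (inR r) -> mxadj M \is a mxOver (inR r).
Proof. by move=> /mxOverP MR; apply/mxOverP => i j; rewrite mxE inR_conj. Qed.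

Definition revmx n : 'M[algC]_n := \matrix_(i, j) (rev_ord i == j)%:R.

Lemma mul_revmx_mx n (M : 'M[algC]_n) i j : (revmx n *m M) i j = M (rev_ord i) j.
Proof.
rewrite mxE (bigD1 (rev_ord i)) //= mxE eqxx mul1r big1 ?addr0 // => l neq_l.
by rewrite mxE eq_sym (negbTE neq_l) mul0r.
Qed.

Lemma mul_mx_revmx n (M : 'M[algC]_n) i j : (M *m revmx n) i j = M i (rev_ord j).
Proof.
rewrite mxE (bigD1 (rev_ord j)) //= mxE rev_ordK eqxx mulr1 big1 ?addr0 // => l neq_l.
by rewrite mxE (canF_eq rev_ordK) (negbTE neq_l) mulr0.
Qed.

Lemma revmxK n : revmx n *m revmx n = 1%:M.
Proof. by apply/matrixP => i j; rewrite mul_revmx_mx !mxE rev_ordK. Qed.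

Lemma revmx_diag n (d : 'I_n -> algC) :
  revmx n *m diag_mx (\row_j d j) *m revmx n = diag_mx (\row_j d (rev_ord j)).
Proof.
apply/matrixP => i j; rewrite mul_mx_revmx mul_revmx_mx !mxE.
by rewrite (inj_eq rev_ord_inj).
Qed.

Lemma revmx_mxOver r n : revmx n \is a mxOver (inR r).
Proof. by apply/mxOverP => i j; rewrite mxE; case: eqP; rewrite ?rpred1 ?rpred0. Qed.

Section AdjointFactorization.
Variables (n : nat) (L : algC) (A P P' Q Q' D Dinv : 'M[algC]_n).
Hypotheses (adjAA : mxadj A *m A = L%:M) (defA : A = P *m D *m Q).
Hypotheses (PP' : P *m P' = 1%:M) (P'P : P' *m P = 1%:M).
Hypotheses (QQ' : Q *m Q' = 1%:M) (DDinv : D *m Dinv = 1%:M).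

Lemma mxadj_factor_mul_inv :
  mxadj Q *m mxadj D *m mxadj P *m P = Q' *m (L *: Dinv).
Proof.
have := congr1 (mulmx^~ (Q' *m Dinv)) adjAA.
rewrite /= defA !mxadjM mul_scalar_mx scalemxAr !mulmxA => <-.
by rewrite -(mulmxA _ Q Q') QQ' mulmx1 -(mulmxA _ D Dinv) DDinv mulmx1.
Qed.

Lemma scale_inv_factor :
  L *: Dinv = Q *m mxadj Q *m mxadj D *m mxadj P *m P.
Proof.
have -> : Q *m mxadj Q *m mxadj D *m mxadj P *m P =
    Q *m (mxadj Q *m mxadj D *m mxadj P *m P) by rewrite !mulmxA.
by rewrite mxadj_factor_mul_inv mulmxA QQ' mul1mx.
Qed.

Lemma mxadj_factor :
  mxadj D = mxadj Q' *m Q' *m (L *: Dinv) *m P' *m mxadj P'.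
Proof.
rewrite -(mulmxA _ Q') -mxadj_factor_mul_inv !mulmxA -mxadjM QQ' mxadj1 mul1mx.
by rewrite -(mulmxA _ P P') PP' mulmx1 -mulmxA -mxadjM P'P mxadj1 mulmx1.
Qed.

End AdjointFactorization.

Lemma mul_diag_inv n (d : 'I_n -> algC) : (forall k, d k != 0) ->
  diag_mx (\row_k d k) *m diag_mx (\row_k (d k)^-1) = 1%:M.
Proof.
by move=> d_neq0; apply/matrixP => i k; rewrite mul_diag_mx !mxE mulrnAr divff.
Qed.

Lemma scale_diag_inv_revmx n (c : algC) (d : 'I_n -> algC) :
  c *: diag_mx (\row_k (d k)^-1) =
    revmx n *m diag_mx (\row_k (c / d (rev_ord k))) *m revmx n.
Proof. by rewrite revmx_diag; apply/matrixP => i k; rewrite !mxE rev_ordK mulrnAr. Qed.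

Lemma dvdR_chain_conj r n (d : 'I_n -> algC) :
  dvdR_chain r d -> dvdR_chain r (fun k => (d k)^*).
Proof.
move=> chain_d i k /chain_d[c [cR eq_c]]; exists c^*; split; first exact: inR_conj.
by rewrite eq_c rmorphM.
Qed.

Lemma dvdR_chain_div_rev r n (c : algC) (d : 'I_n -> algC) :
  (forall k, d k != 0) -> dvdR_chain r d -> dvdR_chain r (fun k => c / d (rev_ord k)).
Proof.
move=> d_neq0 chain_d i k eq_k; have eq_rev : rev_ord i = (rev_ord k).+1 :> nat.
  by rewrite /= eq_k subnSK ?subnS // -eq_k.
have [e [eR eq_e]] := chain_d _ _ eq_rev; exists e; split => //.
have e_neq0 : e != 0.
  by apply: contraTneq (d_neq0 (rev_ord i)) => e0; rewrite eq_e e0 mulr0 eqxx.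
by rewrite eq_e invfM mulrA mulfVK.
Qed.

Section ScaledUnitarySNF.
Variables (r : Rkind) (n : nat) (L : algC) (A P P' Q Q' : 'M[algC]_n).
Variable alpha : 'I_n -> algC.
Hypotheses (adjAA : mxadj A *m A = L%:M).
Hypothesis defA : A = P *m diag_mx (\row_k alpha k) *m Q.
Hypotheses (PR : P \is a mxOver (inR r)) (P'R : P' \is a mxOver (inR r)).
Hypotheses (QR : Q \is a mxOver (inR r)) (Q'R : Q' \is a mxOver (inR r)).
Hypotheses (PP' : P *m P' = 1%:M) (P'P : P' *m P = 1%:M) (QQ' : Q *m Q' = 1%:M).
Hypothesis alpha_neq0 : forall k, alpha k != 0.

Let DDinv := mul_diag_inv alpha_neq0.

Lemma mxdvdR_conj_div_rev :
  mxdvdR r (diag_mx (\row_k (alpha k)^*)) (diag_mx (\row_k (L / alpha (rev_ord k)))).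
Proof.
exists (revmx n *m Q *m mxadj Q), (mxadj P *m P *m revmx n).
split; do ?apply: mxOverM; rewrite ?revmx_mxOver ?mxadj_mxOver //.
have -> : diag_mx (\row_k (L / alpha (rev_ord k))) =
    revmx n *m (L *: diag_mx (\row_k (alpha k)^-1)) *m revmx n.
  by rewrite scale_diag_inv_revmx !mulmxA revmxK mul1mx -mulmxA revmxK mulmx1.
by rewrite (scale_inv_factor adjAA defA QQ' DDinv) -mxadj_diag !mulmxA.
Qed.

Lemma mxdvdR_div_rev_conj :
  mxdvdR r (diag_mx (\row_k (L / alpha (rev_ord k)))) (diag_mx (\row_k (alpha k)^*)).
Proof.
exists (mxadj Q' *m Q' *m revmx n), (revmx n *m P' *m mxadj P').
split; do ?apply: mxOverM; rewrite ?revmx_mxOver ?mxadj_mxOver //.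
rewrite -mxadj_diag (mxadj_factor adjAA defA PP' P'P QQ' DDinv).
by rewrite scale_diag_inv_revmx !mulmxA.
Qed.

Lemma assocR_conj_div_rev : dvdR_chain r alpha ->
  forall j, assocR r (alpha j)^* (L / alpha (rev_ord j)).
Proof.
move=> chain_alpha; apply: diag_mxdvdR_assocR.
- exact: dvdR_chain_conj.
- exact: dvdR_chain_div_rev.
- by move=> k; rewrite conjC_eq0.
- exact: mxdvdR_conj_div_rev.
- exact: mxdvdR_div_rev_conj.
Qed.

End ScaledUnitarySNF.

Lemma normalized_Re_gt0 r x : normalized r x -> 0 < 'Re x /\ 0 <= 'Im x.
Proof.
case: r => //= x_gt0; have xR : x \is Num.real by apply: gtr0_real.
by rewrite (Creal_ReP _ xR) (Creal_ImP _ xR).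
Qed.

Lemma normalized_Re_conjM_gt0 r x y :
  normalized r x -> normalized r y -> 0 < 'Re (x^* * y).
Proof.
move=> /normalized_Re_gt0[Rex Imx] /normalized_Re_gt0[Rey Imy].
rewrite ReM Re_conj Im_conj mulNr opprK.
by rewrite (lt_le_trans (mulr_gt0 Rex Rey)) // lerDl mulr_ge0.
Qed.

Lemma normalized_neq0 r x : normalized r x -> x != 0.
Proof.
move=> /normalized_Re_gt0[Rex_gt0 _].
by apply: contraTneq Rex_gt0 => ->; rewrite raddf0 ltxx.
Qed.

(* The unit relating the two is L / (x^* y), whose real part is positive. *)
Lemma normalized_assocR_conjM r (L x y : algC) :
  0 < L -> normalized r x -> normalized r y -> assocR r x^* (L / y) -> x^* * y = L.
Proof.
move=> L_gt0 nx ny [w [w' [wR w'R ww' eq_w]]].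
have xc_neq0 : x^* != 0 by rewrite conjC_eq0 (normalized_neq0 nx).
have xy_neq0 : x^* * y != 0 by rewrite mulf_neq0 ?(normalized_neq0 ny).
have def_w : w = L / (x^* * y) by rewrite invfM mulrCA eq_w mulKf.
have Re_w : 0 < 'Re w.
  have LR : L \is Num.real by apply: gtr0_real.
  rewrite def_w Re_div (Creal_ReP _ LR) (Creal_ImP _ LR) mul0r addr0.
  apply: divr_gt0; last by rewrite exprn_gt0 // normr_gt0.
  by rewrite mulr_gt0 // (normalized_Re_conjM_gt0 nx ny).
by rewrite -[RHS](divfK xy_neq0) -def_w (inR_unit_Re_gt0 wR w'R ww' Re_w) mul1r.
Qed.

Theorem mainTheorem7 (r : Rkind) (n lambda : nat) (A : 'M[algC]_n)
    (alpha : 'I_n -> algC) :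
  (0 < lambda)%N ->
  (forall i j, inR r (A i j)) ->
  mxadj A *m A = (lambda%:R : algC)%:M ->
  isSNF r A alpha ->
  forall j : 'I_n, (alpha j)^* * alpha (rev_ord j) = lambda%:R.
Proof.
move=> lambda_gt0 _ adjAA [_ [[P [Q [[/mxOverP PR [P' [/mxOverP P'R [PP' P'P]]]]
  [[/mxOverP QR [Q' [/mxOverP Q'R [QQ' _]]]] defA]]]] [chain_alpha norm_alpha]]] j.
have alpha_neq0 k : alpha k != 0 by apply: normalized_neq0 (norm_alpha k).
apply: normalized_assocR_conjM (norm_alpha j) (norm_alpha _) _; first by rewrite ltr0n.
exact: (assocR_conj_div_rev adjAA defA PR P'R QR Q'R PP' P'P QQ' alpha_neq0).
Qed.
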